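(* Let $H \in \mathrm{Herm}(\mathcal{H})$, $\mathcal{A}$ an ancillary Hilbert space and $H' \in \mathrm{Herm}(\mathcal{H}\otimes\mathcal{A})$. Suppose $(H',\mathcal{A})$ is an $(\eta,\epsilon)$-gadget for $H$ with $\eta < \sqrt{2}$, with projectors $P$ and $P' = U(\mathbb{I}\otimes P)U^\dagger$ as in the definition, and let $\tilde\epsilon = \epsilon + 4\eta\|H\|$. Then $(H',\mathcal{A})$ is also an $(\eta,\tilde\epsilon)$-gadget for $H$ in which the unitary $U$ of the definition can be taken to be the direct rotation $W$ between the subspaces defined by $\mathbb{I}\otimes P$ and $P'$.
   Context: $\|\cdot\|$ is the operator norm. $(H',\mathcal{A})$ is an $(\eta,\epsilon)$-gadget for $H$ if there exist an orthogonal projector $P\neq 0$ on $\mathcal{A}$ and a unitary $U$ on $\mathcal{H}\otimes\mathcal{A}$ with $\|U - \mathbb{I}\| \le \eta$ and $\|P'H'P' - U(H\otimes P)U^\dagger\| \le \epsilon$, where $P' = U(\mathbb{I}\otimes P)U^\dagger$. Direct rotation: for orthogonal projectors $P_1, P_2$ of equal rank with $\|P_1 - P_2\| < 1$, let $R_1 = \mathbb{I} - 2P_1$, $R_2 = \mathbb{I} - 2P_2$; the direct rotation from $P_1$ to $P_2$ is $\sqrt{R_2R_1}$, with the square root taken with branch cut along the negative real axis and $\sqrt{1} = 1$. It is unitary and maps $P_1$ to $P_2$ by conjugation. *)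

(* finite-dimensional Hilbert spaces C^n with C = R[i],
   R an arbitrary real closed field (e.g. the real numbers). *)
From HB Require Import structures.
From mathcomp Require Import all_boot all_order all_algebra.
From mathcomp Require Import complex mxtens.
Set Implicit Arguments. Unset Strict Implicit. Unset Printing Implicit Defensive.
Import Order.TTheory GRing.Theory Num.Theory.
Local Open Scope ring_scope.

Section Defs.
Variable R : rcfType.
Local Notation C := (R[i]).

Definition adj {m n} (A : 'M[C]_(m, n)) : 'M[C]_(n, m) := (map_mx Num.conj A)^T.

Definition is_hermitian {n} (A : 'M[C]_n) : Prop := adj A = A.
Definition unitary {n} (U : 'M[C]_n) : Prop := adj U *m U = 1%:M /\ U *m adj U = 1%:M.
Definition orth_proj {n} (P : 'M[C]_n) : Prop := P *m P = P /\ adj P = P.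

Definition vnorm {n} (v : 'cV[C]_n) : R :=
  Num.sqrt (\sum_i (complex.Re (v i 0) ^+ 2 + complex.Im (v i 0) ^+ 2)).

Definition opnorm_le {m n} (A : 'M[C]_(m, n)) (c : R) : Prop :=
  forall v : 'cV[C]_n, vnorm (A *m v) <= c * vnorm v.

Definition is_opnorm {m n} (A : 'M[C]_(m, n)) (c : R) : Prop :=
  opnorm_le A c /\ forall c', opnorm_le A c' -> c <= c'.

Definition opnorm_lt {m n} (A : 'M[C]_(m, n)) (c : R) : Prop :=
  exists2 c', c' < c & opnorm_le A c'.

(* principal square root of a complex number: branch cut along the negative
   real axis, sqrt 1 = 1 (values with Re w > 0, or Re w = 0 and Im w >= 0) *)
Definition psqrt (z : C) : C :=
  let w := sqrtC z in if 0 <= complex.Re w then w else - w.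

Definition is_psqrt_mx {n} (M S : 'M[C]_n) : Prop :=
  exists (Q : 'M[C]_n) (d : 'rV[C]_n),
    [/\ unitary Q, M = Q *m diag_mx d *m adj Q &
        S = Q *m diag_mx (map_mx psqrt d) *m adj Q].

Definition direct_rotation {n} (P1 P2 W : 'M[C]_n) : Prop :=
  [/\ orth_proj P1, orth_proj P2, \rank P1 = \rank P2,
      opnorm_lt (P1 - P2) 1 &
      is_psqrt_mx ((1%:M - 2%:R *: P2) *m (1%:M - 2%:R *: P1)) W].

(* the data (P, U) witnessing that (H', A) is an (eta, eps)-gadget for H,
   with dim H = n and dim A = m; H (x) A is C^(n*m) via tensmx *)
Definition gadget_witness {n m} (H : 'M[C]_n) (H' : 'M[C]_(n * m))
    (eta eps : R) (P : 'M[C]_m) (U : 'M[C]_(n * m)) : Prop :=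
  let P' := U *m (1%:M *t P) *m adj U in
  [/\ orth_proj P, P != 0, unitary U, opnorm_le (U - 1%:M) eta &
      opnorm_le (P' *m H' *m P' - U *m (H *t P) *m adj U) eps].

Definition gadget {n m} (H : 'M[C]_n) (H' : 'M[C]_(n * m)) (eta eps : R) : Prop :=
  exists P U, @gadget_witness n m H H' eta eps P U.

End Defs.

(* Let R1 = I - 2 P1 and R2 = I - 2 P2 be the reflections of P1 = I (x) P and
   P2 = U P1 U^dagger.  Since ||U - I|| <= eta, each unit vector in the range
   of P1 or of I - P1 keeps a component of length at least c = 1 - eta^2/2 in
   the corresponding range for P2, whence ||(P1 - P2) v||^2 <= (1 - c^2)||v||^2
   and every eigenvalue of the unitary M = R2 R1 has real part at least
   2c^2 - 1.  The principal square root W of M thus has eigenvalues of real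
   part at least c, i.e. ||W - I|| <= eta.  As R1 conjugates M to its adjoint
   it also conjugates W to W^dagger, so W R1 W^dagger = W^2 R1 = R2 and W maps
   P1 to P2.  Finally ||V X V^dagger - X|| <= 2 eta ||X|| for V = U, W and
   X = H (x) P, which costs the extra 4 eta ||H||. *)

From HB Require Import structures.
From mathcomp Require Import all_boot all_order all_algebra.
From mathcomp Require Import complex mxtens spectral ring lra.
Set Implicit Arguments. Unset Strict Implicit. Unset Printing Implicit Defensive.
Import Order.TTheory GRing.Theory Num.Theory.
Local Open Scope ring_scope.
Local Notation "x %:C" := (real_complex _ x) : ring_scope.

Section Adjoint.
Variable R : rcfType.
Local Notation C := (R[i]).

Lemma adjM m n p (A : 'M[C]_(m, n)) (B : 'M[C]_(n, p)) : adj (A *m B) = adj B *m adj A.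
Proof. by rewrite /adj map_mxM trmx_mul. Qed.

Lemma adj_tensmx m n p q (A : 'M[C]_(m, n)) (B : 'M[C]_(p, q)) :
  adj (A *t B) = adj A *t adj B.
Proof. by rewrite /adj map_mxT trmx_tens. Qed.

Lemma adj1 n : adj (1%:M : 'M[C]_n) = 1%:M.
Proof. by rewrite /adj map_mx1 trmx1. Qed.

Lemma adjK m n (A : 'M[C]_(m, n)) : adj (adj A) = A.
Proof. by apply/matrixP=> i j; rewrite !mxE conjCK. Qed.

Lemma adjD m n (A B : 'M[C]_(m, n)) : adj (A + B) = adj A + adj B.
Proof. by rewrite /adj map_mxD linearD. Qed.

Lemma adjN m n (A : 'M[C]_(m, n)) : adj (- A) = - adj A.
Proof. by rewrite /adj map_mxN linearN. Qed.

Lemma adjB m n (A B : 'M[C]_(m, n)) : adj (A - B) = adj A - adj B.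
Proof. by rewrite adjD adjN. Qed.

Lemma adjZ m n (a : C) (A : 'M[C]_(m, n)) : adj (a *: A) = a^* *: adj A.
Proof. by apply/matrixP=> i j; rewrite !mxE rmorphM. Qed.

Lemma adj_diag_mx n (d : 'rV[C]_n) : adj (diag_mx d) = diag_mx (map_mx Num.conj d).
Proof. by rewrite /adj map_diag_mx tr_diag_mx. Qed.

Lemma adjE m n (A : 'M[C]_(m, n)) : adj A = map_mx Num.conj A^T.
Proof. by rewrite /adj map_trmx. Qed.

Lemma unitary_adj n (U : 'M[C]_n) : unitary U -> unitary (adj U).
Proof. by case=> U1 U2; split; rewrite adjK. Qed.

Lemma unitaryM n (A B : 'M[C]_n) : unitary A -> unitary B -> unitary (A *m B).
Proof.
case=> A1 A2 [B1 B2]; rewrite /unitary adjM; split.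
  by rewrite mulmxA -(mulmxA _ (adj A)) A1 mulmx1 B1.
by rewrite mulmxA -(mulmxA A) B2 mulmx1 A2.
Qed.

Lemma unitary_conj n (Q D : 'M[C]_n) :
  unitary Q -> unitary D -> unitary (Q *m D *m adj Q).
Proof. by move=> uQ uD; do 2?apply: unitaryM => //; apply: unitary_adj. Qed.

End Adjoint.

Section Norms.
Variable R : rcfType.
Local Notation C := (R[i]).

Lemma ReD (x y : C) : complex.Re (x + y) = complex.Re x + complex.Re y.
Proof. by case: x; case: y. Qed.

Lemma ReN (x : C) : complex.Re (- x) = - complex.Re x.
Proof. by case: x. Qed.

Lemma Re_conj (x : C) : complex.Re x^* = complex.Re x.
Proof. by case: x. Qed.

Lemma Re_realM (a : R) (x : C) : complex.Re (a%:C * x) = a * complex.Re x.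
Proof. by case: x => b c /=; ring. Qed.

Definition sqnormC (z : C) : R := complex.Re z ^+ 2 + complex.Im z ^+ 2.

Lemma sqnormCE (z : C) : (sqnormC z)%:C = `|z| ^+ 2.
Proof. exact: add_Re2_Im2. Qed.

Lemma mul_conjC (z : C) : z^* * z = (sqnormC z)%:C.
Proof. by rewrite sqnormCE normCK mulrC. Qed.

Lemma sqnormC_ge0 (z : C) : 0 <= sqnormC z.
Proof. by rewrite addr_ge0 ?sqr_ge0. Qed.

Lemma sqnormC_eq0 (z : C) : (sqnormC z == 0) = (z == 0).
Proof. by case: z => a b; rewrite /sqnormC paddr_eq0 ?sqr_ge0 // !sqrf_eq0 eq_complex. Qed.

Lemma sqnormCM (x y : C) : sqnormC (x * y) = sqnormC x * sqnormC y.
Proof. by case: x => a b; case: y => c d; rewrite /sqnormC /=; ring. Qed.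

Lemma sqnormC_real (a : R) : sqnormC a%:C = a ^+ 2.
Proof. by rewrite /sqnormC /= expr0n addr0. Qed.

Definition sqnorm n (v : 'cV[C]_n) : R := \sum_i sqnormC (v i 0).
Definition dotC n (u v : 'cV[C]_n) : C := (adj u *m v) 0 0.
Definition rdot n (u v : 'cV[C]_n) : R := complex.Re (dotC u v).

Lemma vnormE n (v : 'cV[C]_n) : vnorm v = Num.sqrt (sqnorm v).
Proof. by []. Qed.

Lemma dotC_self n (v : 'cV[C]_n) : dotC v v = (sqnorm v)%:C.
Proof.
rewrite /dotC mxE rmorph_sum; apply: eq_bigr => i _.
by rewrite !mxE mul_conjC.
Qed.

Lemma sqnorm_rdot n (v : 'cV[C]_n) : sqnorm v = rdot v v.
Proof. by rewrite /rdot dotC_self. Qed.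

Lemma sqnorm_ge0 n (v : 'cV[C]_n) : 0 <= sqnorm v.
Proof. by apply: sumr_ge0 => i _; apply: sqnormC_ge0. Qed.

Lemma sqnorm_eq0 n (v : 'cV[C]_n) : sqnorm v = 0 -> v = 0.
Proof.
move/eqP; rewrite psumr_eq0 => [/allP v0|i _]; last exact: sqnormC_ge0.
apply/matrixP => i j; rewrite ord1 mxE.
by apply/eqP; rewrite -sqnormC_eq0; apply: (v0 i); rewrite mem_index_enum.
Qed.

Lemma sqnorm0 n : sqnorm (0 : 'cV[C]_n) = 0.
Proof. by rewrite /sqnorm big1 // => i _; rewrite mxE sqnormC_real expr0n. Qed.

Lemma rdot_adjl m n (A : 'M[C]_(m, n)) u v : rdot (A *m u) v = rdot u (adj A *m v).
Proof. by rewrite /rdot /dotC adjM mulmxA. Qed.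

Lemma rdotC n (u v : 'cV[C]_n) : rdot u v = rdot v u.
Proof. by rewrite /rdot /dotC -[adj u *m v]adjK adjM adjK !mxE Re_conj. Qed.

Lemma rdotDr n (u v w : 'cV[C]_n) : rdot w (u + v) = rdot w u + rdot w v.
Proof. by rewrite /rdot /dotC mulmxDr mxE ReD. Qed.

Lemma rdotNr n (u w : 'cV[C]_n) : rdot w (- u) = - rdot w u.
Proof. by rewrite /rdot /dotC mulmxN mxE ReN. Qed.

Lemma rdotZr n (a : R) (u w : 'cV[C]_n) : rdot w (a%:C *: u) = a * rdot w u.
Proof. by rewrite /rdot /dotC -scalemxAr mxE Re_realM. Qed.

Lemma rdotDl n (u v w : 'cV[C]_n) : rdot (u + v) w = rdot u w + rdot v w.
Proof. by rewrite rdotC rdotDr !(rdotC w). Qed.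

Lemma rdotNl n (u w : 'cV[C]_n) : rdot (- u) w = - rdot u w.
Proof. by rewrite rdotC rdotNr rdotC. Qed.

Lemma rdotZl n (a : R) (u w : 'cV[C]_n) : rdot (a%:C *: u) w = a * rdot u w.
Proof. by rewrite rdotC rdotZr rdotC. Qed.

Lemma rdot0r n (u : 'cV[C]_n) : rdot u 0 = 0.
Proof. by rewrite /rdot /dotC mulmx0 mxE. Qed.

Lemma sqnormD n (u v : 'cV[C]_n) :
  sqnorm (u + v) = sqnorm u + sqnorm v + 2%:R * rdot u v.
Proof. by rewrite !sqnorm_rdot rdotDl !rdotDr (rdotC v u); ring. Qed.

Lemma sqnormB n (u v : 'cV[C]_n) :
  sqnorm (u - v) = sqnorm u + sqnorm v - 2%:R * rdot u v.
Proof. by rewrite !sqnorm_rdot rdotDl !rdotDr !rdotNl !rdotNr opprK (rdotC v u); ring. Qed.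

Lemma sqnormN n (u : 'cV[C]_n) : sqnorm (- u) = sqnorm u.
Proof. by rewrite !sqnorm_rdot rdotNl rdotNr opprK. Qed.

Lemma sqnormZ n (a : C) (u : 'cV[C]_n) : sqnorm (a *: u) = sqnormC a * sqnorm u.
Proof. by rewrite /sqnorm mulr_sumr; apply: eq_bigr => i _; rewrite mxE sqnormCM. Qed.

Lemma sqnorm_unitary n (U : 'M[C]_n) v : unitary U -> sqnorm (U *m v) = sqnorm v.
Proof. by case=> U1 _; rewrite !sqnorm_rdot rdot_adjl mulmxA U1 mul1mx. Qed.

Lemma rdot_sqr_le n (u v : 'cV[C]_n) : rdot u v ^+ 2 <= sqnorm u * sqnorm v.
Proof.
have [/sqnorm_eq0 ->|v0] := eqVneq (sqnorm v) 0.
  by rewrite rdot0r expr0n mulr_ge0 ?sqnorm_ge0.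
have vpos : 0 < sqnorm v by rewrite lt_def v0 sqnorm_ge0.
(* |u - t v|^2 >= 0 at the minimiser t = <u, v> / |v|^2 *)
have := sqnorm_ge0 (u - (rdot u v / sqnorm v)%:C *: v).
rewrite sqnormB sqnormZ rdotZr sqnormC_real.
set a := sqnorm u; set b := sqnorm v; set r := rdot u v; set t := r / b => h.
have tb : t * b = r by rewrite divfK.
have e : (a + t ^+ 2 * b - 2%:R * (t * r)) * b = a * b - r ^+ 2 by rewrite -tb; ring.
by have := mulr_ge0 h (ltW vpos); rewrite e subr_ge0.
Qed.

Lemma rdot_le_vnorm n (u v : 'cV[C]_n) : rdot u v <= vnorm u * vnorm v.
Proof.
rewrite !vnormE -sqrtrM ?sqnorm_ge0 // (le_trans (ler_norm _)) // -sqrtr_sqr.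
by rewrite ler_sqrt ?mulr_ge0 ?sqnorm_ge0 ?rdot_sqr_le.
Qed.

Lemma vnormD_le n (u v : 'cV[C]_n) : vnorm (u + v) <= vnorm u + vnorm v.
Proof.
have uv_ge0 : 0 <= vnorm u + vnorm v by rewrite addr_ge0 ?sqrtr_ge0.
rewrite -(ger0_norm uv_ge0) -sqrtr_sqr vnormE ler_sqrt ?sqr_ge0 // sqnormD.
have := rdot_le_vnorm u v; rewrite !vnormE.
have := sqr_sqrtr (sqnorm_ge0 u); have := sqr_sqrtr (sqnorm_ge0 v); nra.
Qed.

Lemma vnormN n (u : 'cV[C]_n) : vnorm (- u) = vnorm u.
Proof. by rewrite !vnormE sqnormN. Qed.

Lemma opnorm_leP m n (A : 'M[C]_(m, n)) c : 0 <= c ->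
  opnorm_le A c <-> forall v, sqnorm (A *m v) <= c ^+ 2 * sqnorm v.
Proof.
move=> c_ge0; have cE v : c * vnorm v = Num.sqrt (c ^+ 2 * sqnorm v).
  by rewrite sqrtrM ?sqr_ge0 // sqrtr_sqr ger0_norm.
split=> A_le v; have := A_le v; rewrite cE vnormE ler_sqrt //;
  by rewrite mulr_ge0 ?sqr_ge0 ?sqnorm_ge0.
Qed.

Lemma opnorm_le_lt0 m n (A : 'M[C]_(m, n)) c :
  opnorm_le A c -> c < 0 -> forall v : 'cV[C]_n, v = 0.
Proof.
move=> A_le c_lt0 v; apply/sqnorm_eq0/eqP; rewrite eq_le sqnorm_ge0 andbT.
rewrite -sqrtr_eq0 eq_le sqrtr_ge0 andbT -(nmulr_rge0 _ c_lt0).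
exact: le_trans (sqrtr_ge0 _) (A_le v).
Qed.

Lemma opnormD m n (A B : 'M[C]_(m, n)) a b :
  opnorm_le A a -> opnorm_le B b -> opnorm_le (A + B) (a + b).
Proof.
move=> A_le B_le v; rewrite mulmxDl mulrDl.
exact: le_trans (vnormD_le _ _) (lerD (A_le v) (B_le v)).
Qed.

Lemma opnormN m n (A : 'M[C]_(m, n)) a : opnorm_le A a -> opnorm_le (- A) a.
Proof. by move=> A_le v; rewrite mulNmx vnormN. Qed.

Lemma opnormM m n p (A : 'M[C]_(m, n)) (B : 'M[C]_(n, p)) a b : 0 <= a ->
  opnorm_le A a -> opnorm_le B b -> opnorm_le (A *m B) (a * b).
Proof.
move=> a_ge0 A_le B_le v; rewrite -mulmxA -mulrA.
exact: le_trans (A_le _) (ler_wpM2l a_ge0 (B_le v)).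
Qed.

Lemma vnorm_unitary n (U : 'M[C]_n) v : unitary U -> vnorm (U *m v) = vnorm v.
Proof. by move=> U_unitary; rewrite !vnormE sqnorm_unitary. Qed.

Lemma unitary_opnorm n (U : 'M[C]_n) : unitary U -> opnorm_le U 1.
Proof. by move=> U_unitary v; rewrite vnorm_unitary // mul1r. Qed.

Lemma mx_neq0_dim_gt0 m n (A : 'M[C]_(m, n)) : A != 0 -> (0 < m)%N.
Proof. by case: m A => // A; rewrite flatmx0 eqxx. Qed.

Lemma opnorm_le_ge0 m n (A : 'M[C]_(m, n)) c : (0 < n)%N -> opnorm_le A c -> 0 <= c.
Proof.
move=> n_gt0 A_le; rewrite leNgt; apply/negP => /(opnorm_le_lt0 A_le).
move=> /(_ (delta_mx (Ordinal n_gt0) 0))/matrixP/(_ (Ordinal n_gt0) 0)/eqP.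
by rewrite !mxE !eqxx oner_eq0.
Qed.

Lemma is_opnorm_dim_gt0 m n (A : 'M[C]_(m, n)) c : is_opnorm A c -> (0 < n)%N.
Proof.
case: n A => // A [_ A_min].
(* on the zero space every real bounds A, so there is no least bound *)
have : opnorm_le A (c - 1) by move=> v; rewrite [v]flatmx0 mulmx0 !vnormE !sqnorm0 sqrtr0 mulr0.
by move/A_min; lra.
Qed.

Lemma is_opnorm_ge0 m n (A : 'M[C]_(m, n)) c : is_opnorm A c -> 0 <= c.
Proof. by move=> A_opnorm; apply: opnorm_le_ge0 (is_opnorm_dim_gt0 A_opnorm) A_opnorm.1. Qed.

Lemma opnorm_unitary_conj n (Q A : 'M[C]_n) a : unitary Q ->
  opnorm_le A a -> opnorm_le (Q *m A *m adj Q) a.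
Proof.
move=> Q_unitary A_le v; have Qadj_unitary := unitary_adj Q_unitary.
by rewrite -!mulmxA vnorm_unitary // -(vnorm_unitary v Qadj_unitary).
Qed.

Lemma opnorm_conj_sub n (V X : 'M[C]_n) eta h : unitary V -> opnorm_le (V - 1%:M) eta ->
  0 <= eta -> 0 <= h -> opnorm_le X h -> opnorm_le (V *m X *m adj V - X) (2%:R * eta * h).
Proof.
move=> V_unitary V_near1 eta_ge0 h_ge0 X_le.
have Vadj_le := unitary_opnorm (unitary_adj V_unitary).
have -> : V *m X *m adj V - X = (V - 1%:M) *m (X *m adj V) + X *m (- (adj V *m (V - 1%:M))).
  rewrite mulmxBr mulmx1 (proj1 V_unitary) opprB mulmxBl mul1mx mulmxBr mulmx1.
  by rewrite mulmxA addrA subrK.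
have -> : 2%:R * eta * h = eta * (h * 1) + h * (1 * eta) by ring.
apply: opnormD; apply: opnormM => //; first exact: opnormM.
by apply/opnormN/opnormM.
Qed.

Lemma opnorm_conj_change n (A X V V' : 'M[C]_n) eps eta h :
  unitary V -> unitary V' -> opnorm_le (V - 1%:M) eta -> opnorm_le (V' - 1%:M) eta ->
  0 <= eta -> 0 <= h -> opnorm_le X h -> opnorm_le (A - V *m X *m adj V) eps ->
  opnorm_le (A - V' *m X *m adj V') (eps + 4%:R * eta * h).
Proof.
move=> V_unitary V'_unitary V_near1 V'_near1 eta_ge0 h_ge0 X_le A_le.
set a := V *m X *m adj V; set b := V' *m X *m adj V'.
have -> : A - b = (A - a) + ((a - X) - (b - X)).
  by rewrite opprB (addrA (a - X)) subrK addrA subrK.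
have -> : eps + 4%:R * eta * h = eps + (2%:R * eta * h + 2%:R * eta * h) by ring.
by apply/opnormD/opnormD/opnormN => //; apply: opnorm_conj_sub.
Qed.

End Norms.

Section Projections.
Variable R : rcfType.
Local Notation C := (R[i]).

Lemma orth_proj_rdot n (Q : 'M[C]_n) x y : orth_proj Q -> rdot (Q *m x) y = rdot x (Q *m y).
Proof. by case=> _ Q_herm; rewrite rdot_adjl Q_herm. Qed.

Lemma orth_proj_compl n (Q : 'M[C]_n) : orth_proj Q -> orth_proj (1%:M - Q).
Proof.
case=> QQ Q_herm; split; last by rewrite adjB adj1 Q_herm.
by rewrite mulmxBl mul1mx mulmxBr mulmx1 QQ subrr subr0.
Qed.

Lemma orth_proj_tensmx m n (A : 'M[C]_m) (B : 'M[C]_n) :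
  orth_proj A -> orth_proj B -> orth_proj (A *t B).
Proof. by case=> AA A_herm [BB B_herm]; split; rewrite ?tensmx_mul ?AA ?BB // adj_tensmx A_herm B_herm. Qed.

Lemma orth_proj1 n : orth_proj (1%:M : 'M[C]_n).
Proof. by split; rewrite ?mulmx1 ?adj1. Qed.

Lemma orth_proj_conj n (Q U : 'M[C]_n) : orth_proj Q -> unitary U ->
  orth_proj (U *m Q *m adj U).
Proof.
case=> QQ Q_herm [U1 _]; split; last by rewrite !adjM adjK Q_herm mulmxA.
by rewrite -!mulmxA (mulmxA (adj U)) U1 mul1mx (mulmxA Q) QQ.
Qed.

Lemma unitary_conj_compl n (Q U : 'M[C]_n) : unitary U ->
  U *m (1%:M - Q) *m adj U = 1%:M - U *m Q *m adj U.
Proof. by case=> _ U2; rewrite mulmxBr mulmx1 mulmxBl U2. Qed.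

Lemma mxrank_unitary_conj n (Q U : 'M[C]_n) : unitary U -> \rank (U *m Q *m adj U) = \rank Q.
Proof.
case=> U1 U2; have [Uadj_unit U_unit] := mulmx1_unit U1.
by rewrite mxrankMfree ?row_free_unit // (eqmxMfull Q) ?row_full_unit.
Qed.

Lemma orth_proj_rdot_compl n (Q : 'M[C]_n) x y : orth_proj Q ->
  rdot (Q *m x) ((1%:M - Q) *m y) = 0.
Proof.
move=> Q_proj; rewrite orth_proj_rdot // mulmxA mulmxBr mulmx1 (proj1 Q_proj).
by rewrite subrr mul0mx rdot0r.
Qed.

Lemma sqnorm_proj_compl n (Q : 'M[C]_n) x : orth_proj Q ->
  sqnorm (Q *m x) + sqnorm ((1%:M - Q) *m x) = sqnorm x.
Proof.
move=> Q_proj; have xE : x = Q *m x + (1%:M - Q) *m x.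
  by rewrite mulmxBl mul1mx addrC subrK.
by rewrite {3}xE sqnormD orth_proj_rdot_compl // mulr0 addr0.
Qed.

Lemma orth_proj_opnorm n (Q : 'M[C]_n) : orth_proj Q -> opnorm_le Q 1.
Proof.
move=> Q_proj; apply/opnorm_leP => // v; rewrite expr1n mul1r.
by rewrite -(sqnorm_proj_compl v Q_proj) lerDl sqnorm_ge0.
Qed.

End Projections.

Section NearIdentityConjugation.
Variable R : rcfType.
Local Notation C := (R[i]).
Variables (n : nat) (U : 'M[C]_n) (eta : R).
Hypotheses (U_unitary : unitary U) (U_near1 : opnorm_le (U - 1%:M) eta).
Hypotheses (eta_ge0 : 0 <= eta) (eta_lt : eta ^+ 2 < 2%:R).

Local Notation c := (1 - eta ^+ 2 / 2%:R).

Lemma sqnorm_conj_proj_ge (Q : 'M[C]_n) x : orth_proj Q -> Q *m x = x ->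
  c ^+ 2 * sqnorm x <= sqnorm (U *m Q *m adj U *m x).
Proof.
move=> Q_proj Qx; set Q' := U *m Q *m adj U.
have Q'_proj : orth_proj Q' by apply: orth_proj_conj.
have Q'U : Q' *m (U *m x) = U *m x.
  by rewrite /Q' -!mulmxA (mulmxA (adj U)) (proj1 U_unitary) mul1mx Qx.
have Ux_x : c * sqnorm x <= rdot (U *m x) x.
  have := proj1 (opnorm_leP _ eta_ge0) U_near1 x.
  by rewrite mulmxBl mul1mx sqnormB sqnorm_unitary //; lra.
(* 0 <= |Q' x - c U x|^2, where Re <Q' x, U x> = Re <U x, x> >= c |x|^2 *)
have := sqnorm_ge0 (Q' *m x - c%:C *: (U *m x)).
rewrite sqnormB sqnormZ sqnormC_real (rdotZr c) (sqnorm_unitary x U_unitary).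
rewrite (orth_proj_rdot _ _ Q'_proj) Q'U rdotC.
have c_ge0 : 0 <= c by have := eta_lt; lra.
have := ler_wpM2l c_ge0 Ux_x; nra.
Qed.

Lemma sqnorm_proj_sub_conj_le (P : 'M[C]_n) v : orth_proj P ->
  sqnorm ((P - U *m P *m adj U) *m v) <= (1 - c ^+ 2) * sqnorm v.
Proof.
move=> P_proj; have P'_proj := orth_proj_conj P_proj U_unitary.
have P'_ge x : P *m x = x -> c ^+ 2 * sqnorm x <= sqnorm (U *m P *m adj U *m x).
  exact: sqnorm_conj_proj_ge.
have P'c_ge x : (1%:M - P) *m x = x ->
    c ^+ 2 * sqnorm x <= sqnorm ((1%:M - U *m P *m adj U) *m x).
  by rewrite -unitary_conj_compl //; apply/sqnorm_conj_proj_ge/orth_proj_compl.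
move: (U *m P *m adj U) P'_proj P'_ge P'c_ge => P' P'_proj P'_ge P'c_ge.
have vE := sqnorm_proj_compl v P_proj.
set a := P *m v in vE *; set b := (1%:M - P) *m v in vE *.
have -> : (P - P') *m v = (1%:M - P') *m a - P' *m b.
  by rewrite /a /b !mulmxBl !mul1mx mulmxBr !mulmxA opprB addrA subrK.
rewrite sqnormB rdotC orth_proj_rdot_compl // mulr0 subr0.
have Pa : P *m a = a by rewrite /a mulmxA (proj1 P_proj).
have Pb : (1%:M - P) *m b = b by rewrite /b mulmxA (proj1 (orth_proj_compl P_proj)).
have := P'_ge a Pa; have := P'c_ge b Pb.
have := sqnorm_proj_compl a P'_proj; have := sqnorm_proj_compl b P'_proj.
rewrite -vE; move: (c ^+ 2) => k; clearbody a b; lra.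
Qed.

Lemma opnorm_proj_sub_conj_lt1 (P : 'M[C]_n) : orth_proj P ->
  opnorm_lt (P - U *m P *m adj U) 1.
Proof.
move=> P_proj; have c_gt0 : 0 < c by have := eta_lt; lra.
have s_ge0 : 0 <= 1 - c ^+ 2 by have := eta_lt; have := sqr_ge0 eta; nra.
exists (Num.sqrt (1 - c ^+ 2)).
  by rewrite -[X in _ < X]sqrtr1 ltr_sqrt ?ltr01 // gtrBl exprn_gt0.
apply/opnorm_leP; first exact: sqrtr_ge0.
by move=> v; rewrite sqr_sqrtr //; apply: sqnorm_proj_sub_conj_le.
Qed.

End NearIdentityConjugation.

Section PrincipalSqrt.
Variable R : rcfType.
Local Notation C := (R[i]).

Lemma psqrt_sqr (z : C) : psqrt z ^+ 2 = z.
Proof. by rewrite /psqrt; case: ifP => _; rewrite ?sqrrN sqrtCK. Qed.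

Lemma psqrt_Re_ge0 (z : C) : 0 <= complex.Re (psqrt z).
Proof. by rewrite /psqrt; case: ifP => // /negbT; rewrite -ltNge ReN oppr_ge0 => /ltW. Qed.

Lemma psqrt_unique (z w : C) : w ^+ 2 = z -> 0 < complex.Re w -> psqrt z = w.
Proof.
move=> <- Re_w_gt0; have /eqP := psqrt_sqr (w ^+ 2).
rewrite -subr_eq0 subr_sqr mulf_eq0 subr_eq0 addr_eq0 => /orP[/eqP //|/eqP wN].
by have := psqrt_Re_ge0 (w ^+ 2); rewrite wN ReN oppr_ge0 leNgt Re_w_gt0.
Qed.

Lemma psqrt_conj (z : C) : 0 < complex.Re (psqrt z) -> psqrt z^* = (psqrt z)^*.
Proof. by move=> Re_gt0; apply: psqrt_unique; rewrite ?Re_conj // -rmorphXn psqrt_sqr. Qed.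

Lemma psqrt_unit_bound (z : C) (c : R) : sqnormC z = 1 -> 0 < c ->
  2%:R * c ^+ 2 - 1 <= complex.Re z ->
  [/\ sqnormC (psqrt z) = 1, c <= complex.Re (psqrt z) &
      sqnormC (psqrt z - 1) <= 2%:R * (1 - c)].
Proof.
move=> z_unit c_gt0 Re_z; have := psqrt_sqr z; have := psqrt_Re_ge0 z.
case: (psqrt z) => a b /= a_ge0 abz; rewrite -abz /sqnormC /= in z_unit Re_z *.
have ab1 : a ^+ 2 + b ^+ 2 = 1.
  have : (a ^+ 2 + b ^+ 2) ^+ 2 = 1 by rewrite -z_unit; ring.
  move/eqP; rewrite sqrf_eq1 => /orP[/eqP //|/eqP abN1].
  by have := addr_ge0 (sqr_ge0 a) (sqr_ge0 b); rewrite abN1 ler0N1.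
have c_le_a : c <= a by nra.
by split => //; nra.
Qed.

End PrincipalSqrt.

Section Reflections.
Variable R : rcfType.
Local Notation C := (R[i]).

Definition reflmx n (Q : 'M[C]_n) := 1%:M - 2%:R *: Q.

Lemma reflmx_adj n (Q : 'M[C]_n) : orth_proj Q -> adj (reflmx Q) = reflmx Q.
Proof. by case=> _ Q_herm; rewrite adjB adj1 adjZ rmorph_nat Q_herm. Qed.

Lemma reflmxK n (Q : 'M[C]_n) : orth_proj Q -> reflmx Q *m reflmx Q = 1%:M.
Proof.
case=> QQ _; rewrite /reflmx mulmxBr mulmx1 mulmxBl mul1mx -scalemxAl -scalemxAr QQ.
set T := 2%:R *: Q; have -> : 2%:R *: T = T + T by rewrite /T scalerA -scalerDl -natrM -natrD.
by rewrite opprB addrK subrK.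
Qed.

Lemma unitary_reflmx n (Q : 'M[C]_n) : orth_proj Q -> unitary (reflmx Q).
Proof. by move=> Q_proj; rewrite /unitary reflmx_adj // reflmxK. Qed.

Lemma reflmx_conj n (Q W : 'M[C]_n) : unitary W ->
  W *m reflmx Q *m adj W = reflmx (W *m Q *m adj W).
Proof. by case=> _ W2; rewrite mulmxBr mulmx1 mulmxBl W2 -scalemxAr -scalemxAl. Qed.

Lemma reflmx_inj n : injective (@reflmx n).
Proof.
move=> A B /(congr1 (fun M => 1%:M - M)); rewrite /reflmx !subKr.
by apply: scalerI; rewrite pnatr_eq0.
Qed.

Lemma rdot_reflmxM n (P1 P2 : 'M[C]_n) q : orth_proj P1 -> orth_proj P2 ->
  rdot q (reflmx P2 *m reflmx P1 *m q) = sqnorm q - 2%:R * sqnorm ((P1 - P2) *m q).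
Proof.
move=> P1_proj P2_proj; have Pq_q P x : orth_proj P -> rdot (P *m x) x = sqnorm (P *m x).
  by move=> P_proj; rewrite sqnorm_rdot [RHS]orth_proj_rdot // mulmxA (proj1 P_proj) rdotC.
have two : 2%:R = (2%:R : R)%:C by rewrite rmorph_nat.
rewrite -mulmxA rdotC rdot_adjl reflmx_adj // /reflmx !mulmxBl !mul1mx -!scalemxAl two.
rewrite rdotDl !rdotDr !rdotNl !rdotNr !rdotZl !rdotZr sqnormB -!sqnorm_rdot.
by rewrite Pq_q // (rdotC q) Pq_q //; ring.
Qed.

End Reflections.

Section Spectral.
Variable R : rcfType.
Local Notation C := (R[i]).

Lemma diag_mx_adjM n (d : 'rV[C]_n) :
  adj (diag_mx d) *m diag_mx d = diag_mx (\row_j (sqnormC (d 0 j))%:C).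
Proof.
apply/matrixP => i k; rewrite adj_diag_mx mul_diag_mx !mxE.
by case: eqVneq => _; rewrite ?mulr1n ?mulr0n ?mulr0 ?mul_conjC.
Qed.

Lemma diag_mx_mul_adj n (d : 'rV[C]_n) :
  diag_mx d *m adj (diag_mx d) = diag_mx (\row_j (sqnormC (d 0 j))%:C).
Proof.
apply/matrixP => i k; rewrite adj_diag_mx mul_diag_mx !mxE.
by case: eqVneq => [->|_]; rewrite ?mulr1n ?mulr0n ?mulr0 // mulrC mul_conjC.
Qed.

Lemma unitary_diag_mxP n (d : 'rV[C]_n) :
  unitary (diag_mx d) <-> forall j, sqnormC (d 0 j) = 1.
Proof.
rewrite /unitary diag_mx_adjM diag_mx_mul_adj; split=> [[d1 _] j|d1].
  have /matrixP/(_ j j) := d1; rewrite !mxE eqxx !mulr1n.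
  by rewrite -[1 : C](rmorph1 (real_complex R)) => /complexI.
suff -> : \row_j (sqnormC (d 0 j))%:C = const_mx 1 by rewrite diag_const_mx.
by apply/rowP => j; rewrite !mxE d1.
Qed.

Lemma unitary_spectral n (M : 'M[C]_n) : unitary M ->
  exists Q d, unitary Q /\ M = Q *m diag_mx d *m adj Q.
Proof.
case=> M1 M2; have /orthomx_spectralP M_eq : M \is normalmx.
  by apply/normalmxP; rewrite -adjE M1 M2.
have S_unitary := spectral_unitarymx M.
have S1 : spectralmx M *m adj (spectralmx M) = 1%:M by rewrite adjE; apply/unitarymxP.
exists (adj (spectralmx M)), (spectral_diag M); rewrite adjK; split.
  by split; rewrite adjK // mulmx1C.
by rewrite {1}M_eq (invmx_unitary S_unitary) adjE.
Qed.

Lemma delta_adjMmx n (A : 'M[C]_n) (j : 'I_n) :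
  (adj (delta_mx j (0 : 'I_1)) *m A *m delta_mx j (0 : 'I_1)) 0 0 = A j j.
Proof.
have -> : adj (delta_mx j 0 : 'cV[C]_n) = delta_mx 0 j.
  by rewrite /adj map_delta_mx trmx_delta.
by rewrite -rowE -colE !mxE.
Qed.

Lemma spectral_Re_ge n (M Q : 'M[C]_n) (d : 'rV[C]_n) (r : R) j :
  unitary Q -> M = Q *m diag_mx d *m adj Q ->
  (forall q, r * sqnorm q <= rdot q (M *m q)) -> r <= complex.Re (d 0 j).
Proof.
move=> Q_unitary M_eq M_ge; set e : 'cV[C]_n := delta_mx j (0 : 'I_1).
have e1 : sqnorm e = 1.
  apply: complexI; rewrite rmorph1 -dotC_self /dotC -{1}(mulmx1 (adj e)).
  by rewrite delta_adjMmx mxE eqxx.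
have QMQ : adj Q *m M *m Q = diag_mx d.
  by rewrite M_eq !mulmxA (proj1 Q_unitary) mul1mx -mulmxA (proj1 Q_unitary) mulmx1.
have := M_ge (Q *m e); rewrite sqnorm_unitary // e1 mulr1 rdot_adjl /rdot /dotC.
have -> : adj e *m (adj Q *m (M *m (Q *m e))) = adj e *m (adj Q *m M *m Q) *m e.
  by rewrite !mulmxA.
by rewrite QMQ delta_adjMmx mxE eqxx.
Qed.

Lemma opnorm_diag_mx_sub1 n (w : 'rV[C]_n) (eta : R) : 0 <= eta ->
  (forall j, sqnormC (w 0 j - 1) <= eta ^+ 2) -> opnorm_le (diag_mx w - 1%:M) eta.
Proof.
move=> eta_ge0 w_near1; apply/opnorm_leP => // v; rewrite /sqnorm mulr_sumr.
apply: ler_sum => i _; rewrite mulmxBl mul1mx mul_diag_mx !mxE.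
by rewrite -{2}(mul1r (v i 0)) -mulrBl sqnormCM ler_wpM2r ?sqnormC_ge0.
Qed.

Lemma diag_psqrt_intertwine n (d : 'rV[C]_n) (X : 'M[C]_n) :
  (forall j, 0 < complex.Re (psqrt (d 0 j))) ->
  diag_mx d *m X = X *m adj (diag_mx d) ->
  diag_mx (map_mx (@psqrt R) d) *m X = X *m adj (diag_mx (map_mx (@psqrt R) d)).
Proof.
move=> Re_gt0 dX; apply/matrixP => i k.
have /matrixP/(_ i k) := dX; rewrite !adj_diag_mx !mul_diag_mx !mul_mx_diag !mxE.
have [-> _|X_neq0 dXik] := eqVneq (X i k) 0; first by rewrite mulr0 mul0r.
have -> : d 0 i = (d 0 k)^* by apply: (mulIf X_neq0); rewrite dXik mulrC.
by rewrite psqrt_conj // mulrC.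
Qed.

Lemma involution_conj_psqrt n (Q Y : 'M[C]_n) (d : 'rV[C]_n) :
  unitary Q -> Y *m Y = 1%:M -> (forall j, 0 < complex.Re (psqrt (d 0 j))) ->
  Y *m (Q *m diag_mx d *m adj Q) *m Y = adj (Q *m diag_mx d *m adj Q) ->
  Y *m (Q *m diag_mx (map_mx (@psqrt R) d) *m adj Q) *m Y =
  adj (Q *m diag_mx (map_mx (@psqrt R) d) *m adj Q).
Proof.
case=> Q1 Q2 YY Re_gt0 YSY; set X := adj Q *m Y *m Q.
have YQ : Y *m Q = Q *m X by rewrite /X !mulmxA Q2 mul1mx.
have QY : adj Q *m Y = X *m adj Q by rewrite /X -!mulmxA Q2 mulmx1.
have XX : X *m X = 1%:M.
  by rewrite /X !mulmxA -(mulmxA _ Q) Q2 mulmx1 -(mulmxA (adj Q) Y Y) YY mulmx1 Q1.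
clearbody X.
have conjQ D : Y *m (Q *m D *m adj Q) *m Y = Q *m (X *m D *m X) *m adj Q.
  by rewrite !mulmxA YQ -!mulmxA QY !mulmxA.
have adjQ D : adj (Q *m D *m adj Q) = Q *m adj D *m adj Q by rewrite !adjM adjK mulmxA.
have Qinj D D' : Q *m D *m adj Q = Q *m D' *m adj Q -> D = D'.
  move=> /(congr1 (fun M => adj Q *m M *m Q)).
  by rewrite !mulmxA Q1 !mul1mx -!mulmxA Q1 !mulmx1.
rewrite conjQ adjQ in YSY; have XdX := Qinj _ _ YSY.
have dX : diag_mx d *m X = X *m adj (diag_mx d).
  by rewrite -XdX !mulmxA XX mul1mx.
rewrite (conjQ (diag_mx _)) (adjQ (diag_mx _)); congr (_ *m _ *m _).
by rewrite -mulmxA (diag_psqrt_intertwine Re_gt0 dX) mulmxA XX mul1mx.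
Qed.

End Spectral.

Section DirectRotation.
Variable R : rcfType.
Local Notation C := (R[i]).
Variables (n : nat) (P1 U : 'M[C]_n) (eta : R).
Hypotheses (P1_proj : orth_proj P1) (U_unitary : unitary U).
Hypotheses (U_near1 : opnorm_le (U - 1%:M) eta).
Hypotheses (eta_ge0 : 0 <= eta) (eta_lt : eta ^+ 2 < 2%:R).

Local Notation P2 := (U *m P1 *m adj U).
Local Notation M := (reflmx P2 *m reflmx P1).
Local Notation c := (1 - eta ^+ 2 / 2%:R).

Let P2_proj : orth_proj P2 := orth_proj_conj P1_proj U_unitary.

Lemma reflmxM_spectral : exists Q d, [/\ unitary Q, M = Q *m diag_mx d *m adj Q &
  forall j, sqnormC (d 0 j) = 1 /\ 2%:R * c ^+ 2 - 1 <= complex.Re (d 0 j)].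
Proof.
have M_unitary : unitary M by apply/unitaryM; apply: unitary_reflmx.
have [Q [d [Q_unitary M_eq]]] := unitary_spectral M_unitary.
have /unitary_diag_mxP d_unit : unitary (diag_mx d).
  have -> : diag_mx d = adj Q *m M *m adj (adj Q).
    by rewrite M_eq adjK !mulmxA (proj1 Q_unitary) mul1mx -mulmxA (proj1 Q_unitary) mulmx1.
  by apply: unitary_conj => //; apply: unitary_adj.
exists Q, d; split => // j; split => //.
apply: (spectral_Re_ge _ Q_unitary M_eq) => q.
rewrite rdot_reflmxM //; have := sqnorm_proj_sub_conj_le U_unitary U_near1 eta_ge0 eta_lt q P1_proj.
by have := sqnorm_ge0 q; move: (c ^+ 2) => k; lra.
Qed.

Lemma direct_rotation_exists : exists W, [/\ is_psqrt_mx M W, unitary W,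
  W *m P1 *m adj W = P2 & opnorm_le (W - 1%:M) eta].
Proof.
have [Q [d [Q_unitary M_eq d_spec]]] := reflmxM_spectral.
have c_gt0 : 0 < c by have := eta_lt; lra.
have w_spec j := psqrt_unit_bound (d_spec j).1 c_gt0 (d_spec j).2.
set w := map_mx (@psqrt R) d.
set W := Q *m diag_mx w *m adj Q; have WE : W = Q *m diag_mx w *m adj Q by [].
have W_unitary : unitary W.
  by apply: unitary_conj => //; apply/unitary_diag_mxP => j; rewrite mxE; case: (w_spec j).
have WW : W *m W = M.
  rewrite WE !mulmxA -(mulmxA _ (adj Q)) (proj1 Q_unitary) mulmx1 -(mulmxA Q).
  rewrite M_eq; congr (_ *m _ *m _); apply/matrixP => i k; rewrite mul_diag_mx !mxE.
  by rewrite mulrnAr -expr2 psqrt_sqr.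
have R1WR1 : reflmx P1 *m W *m reflmx P1 = adj W.
  apply: involution_conj_psqrt => //; first exact: reflmxK.
    by move=> j; case: (w_spec j) => _ /(lt_le_trans c_gt0).
  rewrite -M_eq adjM !reflmx_adj //.
  by rewrite !mulmxA -(mulmxA _ (reflmx P1)) reflmxK // mulmx1.
clearbody W.
have WR1W : W *m reflmx P1 *m adj W = reflmx P2.
  rewrite -R1WR1 !mulmxA -(mulmxA W (reflmx P1)) reflmxK // mulmx1 WW.
  by rewrite -(mulmxA (reflmx P2)) reflmxK // mulmx1.
exists W; split.
- by exists Q, d.
- exact: W_unitary.
- by apply: reflmx_inj; rewrite -reflmx_conj.
have -> : W - 1%:M = Q *m (diag_mx w - 1%:M) *m adj Q.
  by rewrite WE mulmxBr mulmx1 mulmxBl (proj2 Q_unitary).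
apply/opnorm_unitary_conj/opnorm_diag_mx_sub1 => // j; rewrite mxE.
by case: (w_spec j) => _ _ /le_trans; apply; lra.
Qed.

End DirectRotation.

Section Tensor.
Variable R : rcfType.
Local Notation C := (R[i]).

Lemma sum_mxtens_index (V : nmodType) n m (F : 'I_(n * m) -> V) :
  \sum_k F k = \sum_(i < n) \sum_(j < m) F (mxtens_index (i, j)).
Proof.
rewrite pair_bigA (reindex (@mxtens_index n m)) /=; last first.
  exact: onW_bij (Bijective (@mxtens_indexK n m) (@mxtens_unindexK n m)).
by apply: eq_bigr => -[i j] _.
Qed.

Lemma tensmx1_mul_entry n m (H : 'M[C]_n) (v : 'cV[C]_(n * m)) i j :
  ((H *t (1%:M : 'M[C]_m)) *m v) (mxtens_index (i, j)) 0 =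
  (H *m \col_i' v (mxtens_index (i', j)) 0) i 0.
Proof.
rewrite !mxE sum_mxtens_index; apply: eq_bigr => i' _.
rewrite (bigD1 j) //= big1 ?addr0 => [|j' j'_neq].
  by rewrite tensmxE !mxE eqxx mulr1n mulr1.
by rewrite tensmxE !mxE eq_sym (negbTE j'_neq) mulr0n mulr0 mul0r.
Qed.

Lemma opnorm_tensmx1 n m (H : 'M[C]_n) h : 0 <= h -> opnorm_le H h ->
  opnorm_le (H *t (1%:M : 'M[C]_m)) h.
Proof.
move=> h_ge0 /(opnorm_leP _ h_ge0) H_le; apply/opnorm_leP => // v.
rewrite /sqnorm !sum_mxtens_index exchange_big [X in _ <= _ * X]exchange_big mulr_sumr.
apply: ler_sum => j _; under eq_bigr do rewrite tensmx1_mul_entry.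
have colE : sqnorm (\col_i v (mxtens_index (i, j)) 0) =
    \sum_i sqnormC (v (mxtens_index (i, j)) 0).
  by apply: eq_bigr => i _; rewrite mxE.
by rewrite -colE; apply: H_le.
Qed.

Lemma opnorm_tensmx_proj n m (H : 'M[C]_n) (P : 'M[C]_m) h : 0 <= h ->
  opnorm_le H h -> orth_proj P -> opnorm_le (H *t P) h.
Proof.
move=> h_ge0 H_le P_proj; rewrite tensmx_decr -[h]mulr1.
apply: opnormM => //; first exact: opnorm_tensmx1.
by apply/orth_proj_opnorm/orth_proj_tensmx/P_proj/orth_proj1.
Qed.

End Tensor.

Unset Implicit Arguments.

Theorem lemma13 (R : rcfType) (n m : nat)
    (H : 'M[R[i]]_n) (H' : 'M[R[i]]_(n * m)) (eta eps normH : R)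
    (P : 'M[R[i]]_m) (U : 'M[R[i]]_(n * m)) :
  is_hermitian H -> is_hermitian H' ->
  gadget_witness H H' eta eps P U ->
  eta < Num.sqrt 2%:R ->
  is_opnorm H normH ->
  exists W : 'M[R[i]]_(n * m),
    direct_rotation (1%:M *t P) (U *m (1%:M *t P) *m adj U) W /\
    gadget_witness H H' eta (eps + 4%:R * eta * normH) P W.
Proof.
move=> _ _ [P_proj P_neq0 U_unitary U_near1 U_gadget] eta_lt normH_opnorm.
have P1_proj : orth_proj ((1%:M : 'M_n) *t P) by apply/orth_proj_tensmx/P_proj/orth_proj1.
have normH_ge0 := is_opnorm_ge0 normH_opnorm.
have nm_gt0 : (0 < n * m)%N.
  by rewrite muln_gt0 (is_opnorm_dim_gt0 normH_opnorm) (mx_neq0_dim_gt0 P_neq0).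
have eta_ge0 := opnorm_le_ge0 nm_gt0 U_near1.
have eta2_lt : eta ^+ 2 < 2%:R.
  by rewrite -(sqr_sqrtr (ler0n _ 2)) (ltrXn2r 2 eta_ge0 eta_lt).
have [W [W_psqrt W_unitary WP1 W_near1]] :=
  direct_rotation_exists P1_proj U_unitary U_near1 eta_ge0 eta2_lt.
exists W; split.
  split; rewrite ?mxrank_unitary_conj //; first exact: orth_proj_conj.
  exact: opnorm_proj_sub_conj_lt1.
split; [exact: P_proj | exact: P_neq0 | exact: W_unitary | exact: W_near1 |].
rewrite /= WP1.
have HP_le := opnorm_tensmx_proj normH_ge0 (proj1 normH_opnorm) P_proj.
exact: opnorm_conj_change U_unitary W_unitary U_near1 W_near1 eta_ge0 normH_ge0 HP_le U_gadget.
Qed.
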